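(* Let $f:2^N\to\mathbb R_{\ge0}$ be monotone submodular, $|N|=n$, $1\le k\le n$, and $S^\star\in\arg\max_{|T|\le k}f(T)$. Given at least $n\log n$ samples, each a uniformly random subset of $N$ of size $k$ (drawn independently), the sample $S$ of largest value satisfies $f(S)\ge f(S^\star)/k$ with high probability (failure probability polynomially small in $n$).
   Context: $f$ monotone: $f(A)\le f(B)$ for $A\subseteq B$; submodular: $f(A\cup\{e\})-f(A)\ge f(B\cup\{e\})-f(B)$ for $A\subseteq B$. *)

From HB Require Import structures.
From mathcomp Require Import all_boot all_order all_algebra.
From mathcomp Require Import reals exp.
Set Implicit Arguments. Unset Strict Implicit. Unset Printing Implicit Defensive.
Import Order.TTheory GRing.Theory Num.Theory.
Local Open Scope ring_scope.

Definition monotone_setfun (T : finType) (R : numDomainType) (f : {set T} -> R) :=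
  forall A B : {set T}, A \subset B -> f A <= f B.

Definition submodular_setfun (T : finType) (R : numDomainType) (f : {set T} -> R) :=
  forall (A B : {set T}) (e : T), A \subset B ->
    f (e |: B) - f B <= f (e |: A) - f A.

(* Sample space of m independent uniformly random size-k subsets of T:
   all m-tuples (indexed by 'I_m) of k-subsets, with the uniform distribution. *)
Definition ksamples (T : finType) (k m : nat) : {set {ffun 'I_m -> {set T}}} :=
  [set s : {ffun 'I_m -> {set T}} | [forall i, #|s i| == k]].

Definition uprob (R : numFieldType) (X : finType) (Om E : {set X}) : R :=
  #|E :&: Om|%:R / #|Om|%:R.

(* Value of the best (largest-value) sample; f is nonnegative so 0 is a
   neutral element for max. *)
Definition best_value (T : finType) (R : realDomainType) (m : nat)
  (f : {set T} -> R) (s : {ffun 'I_m -> {set T}}) : R :=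
  \big[Num.max/0]_(i < m) f (s i).

From HB Require Import structures.
From mathcomp Require Import all_boot all_order all_algebra.
From mathcomp Require Import reals exp sequences ring lra.
Import Order.TTheory GRing.Theory Num.Theory.
Set Implicit Arguments.
Unset Strict Implicit.
Unset Printing Implicit Defensive.

Local Open Scope ring_scope.

(* Let e be a best singleton. By submodularity a set of size at most k is
   worth at most k times the best singleton, so f({e}) is at least the optimum
   divided by k, and any sample containing e already succeeds. A uniform
   k-subset misses e with probability 1 - k/n, so all m samples miss it with
   probability (1 - k/n)^m <= exp(-m/n) <= 1/n. *)

Section SubmodularSingletons.

Variables (R : numDomainType) (T : finType) (f : {set T} -> R).
Hypothesis f_sub : submodular_setfun f.

Lemma submodular_le_sum_singletons (A : {set T}) :
  f A - f set0 <= \sum_(x in A) (f [set x] - f set0).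
Proof.
elim: {A}_.+1 {-2}A (ltnSn #|A|) => // n IH A; rewrite ltnS => cardA.
have [-> | [x xA]] := set_0Vmem A; first by rewrite big_set0 subrr.
rewrite (big_setD1 x xA) /=.
have IHx : f (A :\ x) - f set0 <= \sum_(y in A :\ x) (f [set y] - f set0).
  by apply: IH; rewrite (leq_trans _ cardA) // (cardsD1 x A) xA.
have := @f_sub set0 (A :\ x) x (sub0set _); rewrite setD1K // setU0 => marg_x.
by rewrite -(subrK (f (A :\ x)) (f A)) -addrA lerD.
Qed.

Lemma submodular_le_card_singleton (e : T) :
  (forall x, f [set x] <= f [set e]) ->
  forall A, f A <= f set0 + #|A|%:R * (f [set e] - f set0).
Proof.
move=> e_best A; rewrite -lerBlDl.
apply: le_trans (submodular_le_sum_singletons A) _.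
rewrite -sum1_card natr_sum mulr_suml.
by apply: ler_sum => x _; rewrite mul1r lerD2r.
Qed.

End SubmodularSingletons.

Lemma best_singleton_ge_div (R : realFieldType) (T : finType)
    (f : {set T} -> R) (e : T) (S : {set T}) (k : nat) :
  (forall A, 0 <= f A) -> monotone_setfun f -> submodular_setfun f ->
  (forall x, f [set x] <= f [set e]) ->
  (1 <= k)%N -> (#|S| <= k)%N ->
  f S / k%:R <= f [set e].
Proof.
move=> f_ge0 f_mono f_sub e_best k_ge1 cardS.
have k_gt0 : 0 < (k%:R : R) by rewrite ltr0n.
rewrite ler_pdivrMr //.
have gain_ge0 : 0 <= f [set e] - f set0 by rewrite subr_ge0 f_mono ?sub0set.
have cardS_le : #|S|%:R * (f [set e] - f set0) <= k%:R * (f [set e] - f set0).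
  by rewrite ler_wpM2r // ler_nat.
have := submodular_le_card_singleton f_sub e_best S.
have := f_ge0 set0; have : 1 <= (k%:R : R) by rewrite ler1n.
nra.
Qed.

Lemma card_ffun_in (T : finType) (m : nat) (A : {set T}) :
  #|[set s : {ffun 'I_m -> T} | [forall i, s i \in A]]| = (#|A| ^ m)%N.
Proof.
rewrite -[m in (_ ^ m)%N]card_ord -card_ffun_on; apply: eq_card => s.
by rewrite inE; apply/forallP/ffun_onP.
Qed.

Lemma card_ksamples (T : finType) (k m : nat) :
  #|ksamples T k m| = ('C(#|T|, k) ^ m)%N.
Proof.
rewrite -card_draws -card_ffun_in; apply: eq_card => s.
by rewrite !inE; apply: eq_forallb => i; rewrite inE.
Qed.

Lemma card_ksamples_avoid (T : finType) (e : T) (k m : nat) :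
  #|[set s : {ffun 'I_m -> {set T}} |
      [forall i, s i \in [set A : {set T} | A \subset [set~ e] & #|A| == k]]]|
  = ('C(#|T|.-1, k) ^ m)%N.
Proof. by rewrite card_ffun_in cards_draws cardsC1. Qed.

Lemma binomial_ratio_pred (R : numFieldType) (n k : nat) :
  (k <= n)%N -> (0 < n)%N ->
  ('C(n.-1, k)%:R / 'C(n, k)%:R : R) = 1 - k%:R / n%:R.
Proof.
move=> k_le_n n_gt0.
have n_neq0 : (n%:R : R) != 0 by rewrite pnatr_eq0 -lt0n.
have bin_neq0 : ('C(n, k)%:R : R) != 0 by rewrite pnatr_eq0 -lt0n bin_gt0.
apply: (mulIf bin_neq0); apply: (mulfI n_neq0).
rewrite mulfVK // -natrM mul_bin_down natrM natrB //.
by field.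
Qed.

Lemma one_sub_expn_le_expR (R : realType) (x : R) (m : nat) :
  x <= 1 -> (1 - x) ^+ m <= expR (- x * m%:R).
Proof.
move=> x_le1; rewrite expRM_natr.
apply: lerXn2r; rewrite ?nnegrE ?subr_ge0 ?expR_ge0 //.
exact: expR_ge1Dx.
Qed.

Lemma one_sub_div_expn_le_inv (R : realType) (n k m : nat) :
  (1 <= k)%N -> (k <= n)%N -> n%:R * ln (n%:R : R) <= m%:R ->
  (1 - k%:R / n%:R) ^+ m <= (n%:R : R)^-1.
Proof.
move=> k_ge1 k_le_n m_ge.
have n_gt0 : 0 < (n%:R : R) by rewrite ltr0n (leq_trans k_ge1).
have inv_le_ratio : n%:R^-1 <= (k%:R / n%:R : R).
  by rewrite ler_pdivlMr // mulVf ?gt_eqF // ler1n.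
have ratio_le1 : k%:R / n%:R <= (1 : R).
  by rewrite ler_pdivrMr // mul1r ler_nat.
apply: le_trans (one_sub_expn_le_expR m ratio_le1) _.
rewrite -[X in _ <= X^-1]lnK ?posrE // -expRN ler_expR mulNr lerN2.
apply: le_trans (ler_wpM2r (ler0n _ _) inv_le_ratio).
by rewrite ler_pdivlMl.
Qed.

Lemma best_value_lt_notin (R : realDomainType) (T : finType) (m : nat)
    (f : {set T} -> R) (s : {ffun 'I_m -> {set T}}) (e : T) :
  monotone_setfun f -> best_value f s < f [set e] -> forall i, e \notin s i.
Proof.
move=> f_mono best_lt i; apply: contraTN best_lt => e_in; rewrite -leNgt.
apply: le_trans (f_mono _ _ _) (le_bigmax _ _ i) => //.
by rewrite sub1set.
Qed.

Theorem lemma24 (R : realType) (N : finType) (f : {set N} -> R)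
  (k m : nat) (Sstar : {set N}) :
  (forall A, 0 <= f A) ->
  monotone_setfun f ->
  submodular_setfun f ->
  (1 <= k)%N -> (k <= #|N|)%N ->
  (#|Sstar| <= k)%N ->
  (forall T : {set N}, (#|T| <= k)%N -> f T <= f Sstar) ->
  #|N|%:R * ln (#|N|%:R : R) <= m%:R ->
  uprob R (ksamples N k m)
    [set s | best_value f s < f Sstar / k%:R] <= (#|N|%:R)^-1.
Proof.
move=> f_ge0 f_mono f_sub k_ge1 k_le_n cardS _ m_ge.
have n_gt0 : (0 < #|N|)%N by apply: leq_trans k_le_n.
have [x0 _] := card_gt0P n_gt0.
pose e := [arg max_(x > x0) f [set x]]%O.
have e_best : forall x, f [set x] <= f [set e].
  by rewrite /e; case: arg_maxP => // y _ y_max x; apply: y_max.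
have Sstar_le := best_singleton_ge_div f_ge0 f_mono f_sub e_best k_ge1 cardS.
have fail_avoid : [set s | best_value f s < f Sstar / k%:R] :&: ksamples N k m
    \subset [set s : {ffun _ -> _} | [forall i, s i \in
                       [set A : {set N} | A \subset [set~ e] & #|A| == k]]].
  apply/subsetP => s; rewrite !inE => /andP[fail /forallP cards].
  apply/forallP => i; rewrite inE cards andbT subsetC sub1set inE.
  exact: best_value_lt_notin f_mono (lt_le_trans fail Sstar_le) i.
have Om_gt0 : 0 < (#|ksamples N k m|%:R : R).
  by rewrite ltr0n card_ksamples expn_gt0 bin_gt0 k_le_n.
rewrite /uprob ler_pdivrMr //.
apply: le_trans (_ : _ <= _%:R) _.
  by rewrite ler_nat; apply: subset_leq_card fail_avoid.
rewrite -ler_pdivrMr // card_ksamples_avoid card_ksamples !natrX -expr_div_n.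
by rewrite binomial_ratio_pred // one_sub_div_expn_le_inv.
Qed.
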